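(* There is an absolute constant $d$ such that for every $N\ge1$ and every randomized XOR decision tree that computes ${\rm MAJORITY}$ exactly on $N$-bit inputs, there exists an input $X\in\{0,1\}^N$ on which the expected number of queries made is at least $\frac23N-\sqrt{\frac{8N}{9\pi}}-d$.
   Context: For $X=X_0X_1\cdots X_{N-1}\in\{0,1\}^N$, ${\rm MAJORITY}(X)=0$ if $X$ contains more zeros than ones and ${\rm MAJORITY}(X)=1$ otherwise. An XOR decision tree on $N$-bit inputs is a deterministic adaptive algorithm that on input $X$ makes a sequence of queries, each either a single bit $X_i$ or $X_i\oplus X_j$ ($0\le i,j\le N-1$), each chosen depending on previous answers, and then outputs a value. A randomized XOR decision tree is a probability distribution over XOR decision trees. It computes $f$ exactly if on every input $X$ it outputs $f(X)$ with probability $1$. *)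

From Stdlib Require Import Reals Lra Lia Arith List.
Import ListNotations.
Open Scope R_scope.

Inductive query : Type :=
| QBit : nat -> query
| QXor : nat -> nat -> query.

(* Deterministic XOR decision tree: a leaf outputs a bit; an inner node makes
   a query and continues in the subtree selected by the answer
   (first subtree for answer 0 = false, second for answer 1 = true). *)
Inductive xtree : Type :=
| Leaf : bool -> xtree
| Node : query -> xtree -> xtree -> xtree.

Definition valid_query (N : nat) (q : query) : Prop :=
  match q with
  | QBit i => (i < N)%nat
  | QXor i j => (i < N)%nat /\ (j < N)%nat
  end.

Fixpoint valid_tree (N : nat) (t : xtree) : Prop :=
  match t with
  | Leaf _ => True
  | Node q t0 t1 => valid_query N q /\ valid_tree N t0 /\ valid_tree N t1
  end.

Definition answer (q : query) (X : list bool) : bool :=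
  match q with
  | QBit i => nth i X false
  | QXor i j => xorb (nth i X false) (nth j X false)
  end.

Fixpoint output (t : xtree) (X : list bool) : bool :=
  match t with
  | Leaf b => b
  | Node q t0 t1 => if answer q X then output t1 X else output t0 X
  end.

Fixpoint cost (t : xtree) (X : list bool) : nat :=
  match t with
  | Leaf _ => 0
  | Node q t0 t1 => S (if answer q X then cost t1 X else cost t0 X)
  end.

Definition ones (X : list bool) : nat := length (filter (fun b => b) X).
Definition zeros (X : list bool) : nat := length (filter negb X).

Definition majority (X : list bool) : bool :=
  if Nat.ltb (ones X) (zeros X) then false else true.

(* Adversary argument under the uniform distribution. Along a path of an XOR decision
   tree, every input bit is either a constant or a free uniform variable xored with a
   constant. A query is then either determined, fixes one free variable, or identifies
   two free variables up to a constant. Let [support] count the free variables of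
   nonzero net weight in the imbalance (ones - zeros). The potential
   2 support - 2 E|imbalance| drops by at most 3 per query on average, and at a leaf
   correctness forces support <= E|imbalance|. Starting from N free variables, the
   expected cost is at least 2/3 (N - E|S_N|) for the simple random walk S_N, and
   Wallis' product bounds E|S_N| <= 1 + 2 sqrt(N / (2 PI)). An averaging argument moves
   the bound from the uniform distribution to a single input. *)

From Stdlib Require Import Reals List.
From Stdlib Require Import Lra Lia ZArith Bool FunctionalExtensionality Classical ClassicalEpsilon.
From Coquelicot Require Import Coquelicot.
Open Scope R_scope.

(** * Wallis integrals and the central binomial coefficient *)

Definition wallis (n : nat) : R := RInt (fun x => sin x ^ n) 0 (PI / 2).

Lemma continuous_sin_pow n x : continuous (fun y => sin y ^ n) x.
Proof.
  apply (ex_derive_continuous (K := R_AbsRing) (V := R_NormedModule)).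
  auto_derive; auto.
Qed.

Lemma ex_RInt_sin_pow n : ex_RInt (fun x => sin x ^ n) 0 (PI / 2).
Proof.
  apply (ex_RInt_continuous (V := R_CompleteNormedModule)).
  intros; apply continuous_sin_pow.
Qed.

Lemma sin_bounds_0_PI2 x : 0 <= x <= PI / 2 -> 0 <= sin x <= 1.
Proof. intros; split; [apply sin_ge_0; lra | apply SIN_bound]. Qed.

Lemma is_derive_cos_sin_pow n x :
  is_derive (fun y => - cos y * sin y ^ (n + 1)) x
    ((INR n + 2) * sin x ^ (n + 2) - (INR n + 1) * sin x ^ n).
Proof.
  evar (d : R); replace (_ - _) with d; subst d.
  - apply (is_derive_mult (fun y => - cos y) (fun y => sin y ^ (n + 1))).
    + apply (is_derive_opp cos), is_derive_cos.
    + apply (is_derive_pow sin), is_derive_sin.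
    + intros; apply Rmult_comm.
  - replace (n + 2)%nat with (S (S n)) by lia.
    replace (n + 1)%nat with (S n) by lia.
    rewrite S_INR; cbn [pow Nat.pred]; unfold plus, mult, opp; simpl.
    pose proof (sin2_cos2 x) as Hsc; unfold Rsqr in Hsc.
    assert (H0 : (INR n + 1) * sin x ^ n * (sin x * sin x + cos x * cos x - 1) = 0)
      by (rewrite Hsc; ring).
    lra.
Qed.

Lemma wallis_rec n : (INR n + 2) * wallis (n + 2) = (INR n + 1) * wallis n.
Proof.
  set (F := fun y => - cos y * sin y ^ (n + 1)).
  set (f := fun y => (INR n + 2) * sin y ^ (n + 2) - (INR n + 1) * sin y ^ n).
  assert (HF : is_RInt f 0 (PI / 2) (minus (F (PI / 2)) (F 0))).
  { apply (is_RInt_derive (V := R_CompleteNormedModule)).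
    - intros x _; apply is_derive_cos_sin_pow.
    - intros x _; apply (ex_derive_continuous (K := R_AbsRing) (V := R_NormedModule)).
      unfold f; auto_derive; auto. }
  assert (Hf : is_RInt f 0 (PI / 2) ((INR n + 2) * wallis (n + 2) - (INR n + 1) * wallis n)).
  { apply (is_RInt_minus (V := R_CompleteNormedModule));
      apply (is_RInt_scal (V := R_CompleteNormedModule)), RInt_correct, ex_RInt_sin_pow. }
  apply (is_RInt_unique (V := R_CompleteNormedModule)) in HF, Hf.
  rewrite Hf in HF; unfold F, minus, plus, opp in HF; simpl in HF.
  rewrite cos_PI2, sin_0 in HF.
  replace (n + 1)%nat with (S n) in HF by lia; simpl in HF. lra.
Qed.

Lemma wallis_0 : wallis 0 = PI / 2.
Proof.
  unfold wallis; rewrite (RInt_ext _ (fun _ => 1)) by reflexivity.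
  rewrite RInt_const; unfold scal; simpl; unfold mult; simpl; lra.
Qed.

Lemma wallis_1 : wallis 1 = 1.
Proof.
  assert (H : is_RInt (fun x => sin x ^ 1) 0 (PI / 2) (minus (- cos (PI / 2)) (- cos 0))).
  { apply (is_RInt_derive (V := R_CompleteNormedModule) (fun x => - cos x)).
    - intros x _; replace (sin x ^ 1) with (- - sin x) by ring.
      apply (is_derive_opp cos), is_derive_cos.
    - intros x _; apply continuous_sin_pow. }
  apply (is_RInt_unique (V := R_CompleteNormedModule)) in H.
  unfold wallis; rewrite H, cos_PI2, cos_0; unfold minus, plus, opp; simpl; lra.
Qed.

Lemma wallis_ge0 n : 0 <= wallis n.
Proof.
  unfold wallis; apply RInt_ge_0; [pose proof PI_RGT_0; lra | apply ex_RInt_sin_pow |].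
  intros x Hx; apply pow_le, sin_bounds_0_PI2; lra.
Qed.

Lemma wallis_S_le n : wallis (S n) <= wallis n.
Proof.
  unfold wallis; apply RInt_le; try apply ex_RInt_sin_pow; [pose proof PI_RGT_0; lra |].
  intros x Hx; pose proof (sin_bounds_0_PI2 x ltac:(lra)).
  assert (0 <= sin x ^ n) by (apply pow_le; lra).
  simpl; nra.
Qed.

Lemma wallis_prod n : (INR n + 1) * wallis (S n) * wallis n = PI / 2.
Proof.
  induction n as [|n IHn].
  - simpl; rewrite wallis_1, wallis_0; lra.
  - pose proof (wallis_rec n) as Hrec; replace (n + 2)%nat with (S (S n)) in Hrec by lia.
    rewrite S_INR; transitivity ((INR n + 2) * wallis (S (S n)) * wallis (S n)); [ring |].
    rewrite Hrec, <- IHn; ring.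
Qed.

(* Pascal's recursion, so that [binom n k = 0] for [k > n]; Stdlib's [C] is junk there. *)
Fixpoint binom (n k : nat) : R :=
  match n, k with
  | O, O => 1
  | O, S _ => 0
  | S _, O => 1
  | S n', S k' => binom n' k' + binom n' (S k')
  end.

Lemma binom_gt n k : (n < k)%nat -> binom n k = 0.
Proof.
  revert k; induction n as [|n IHn]; intros [|k] Hk; try lia; simpl; [reflexivity |].
  rewrite !IHn by lia; ring.
Qed.

Lemma binom_diag n : binom n n = 1.
Proof. induction n as [|n IHn]; simpl; [reflexivity | rewrite IHn, binom_gt by lia; ring]. Qed.

Lemma binom_fact n k : (k <= n)%nat ->
  binom n k * INR (fact k) * INR (fact (n - k)) = INR (fact n).
Proof.
  revert k; induction n as [|n IHn]; intros [|k] Hk; try lia.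
  - simpl; lra.
  - rewrite Nat.sub_0_r; simpl binom; simpl (INR (fact 0)); ring.
  - simpl binom; destruct (Nat.eq_dec k n) as [->|Hkn].
    + rewrite binom_diag, binom_gt, Nat.sub_diag by lia; simpl; lra.
    + replace (S n - S k)%nat with (S (n - S k)) by lia.
      pose proof (IHn k ltac:(lia)) as H1; pose proof (IHn (S k) ltac:(lia)) as H2.
      replace (n - k)%nat with (S (n - S k)) in H1 by lia.
      set (r := (n - S k)%nat) in *.
      assert (En : INR n = INR k + 1 + INR r)
        by (rewrite <- S_INR, <- plus_INR; f_equal; unfold r; lia).
      change (fact (S n)) with (S n * fact n)%nat.
      change (fact (S k)) with (S k * fact k)%nat in *.
      change (fact (S r)) with (S r * fact r)%nat in *.
      rewrite !mult_INR, !S_INR in *.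
      rewrite En; transitivity ((INR k + 1) * INR (fact n) + (INR r + 1) * INR (fact n)); [| ring].
      rewrite <- H1 at 1; rewrite <- H2; ring.
Qed.

Definition central_binom (m : nat) : R := binom (2 * m) m / 2 ^ (2 * m).

Lemma central_binom_S m :
  central_binom (S m) = central_binom m * (2 * INR m + 1) / (2 * INR m + 2).
Proof.
  pose proof (binom_fact (2 * m) m ltac:(lia)) as F.
  pose proof (binom_fact (2 * S m) (S m) ltac:(lia)) as FS.
  replace (2 * m - m)%nat with m in F by lia.
  replace (2 * S m - S m)%nat with (S m) in FS by lia.
  replace (2 * S m)%nat with (S (S (2 * m))) in * by lia.
  change (fact (S m)) with (S m * fact m)%nat in FS.
  change (fact (S (S (2 * m)))) with (S (S (2 * m)) * (S (2 * m) * fact (2 * m)))%nat in FS.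
  rewrite !mult_INR, !S_INR, mult_INR, <- F in FS; simpl (INR 2) in FS.
  assert (Hf : INR (fact m) <> 0) by apply INR_fact_neq_0.
  pose proof (pos_INR m).
  assert (B : binom (S (S (2 * m))) (S m) = binom (2 * m) m * (2 * (2 * INR m + 1)) / (INR m + 1)).
  { assert (Hp : (INR m + 1) * INR (fact m) <> 0)
      by (apply Rmult_integral_contrapositive; split; lra).
    apply (Rmult_eq_reg_r ((INR m + 1) * INR (fact m))); [| exact Hp].
    apply (Rmult_eq_reg_r ((INR m + 1) * INR (fact m))); [| exact Hp].
    rewrite FS; field; lra. }
  unfold central_binom; replace (2 * S m)%nat with (S (S (2 * m))) by lia.
  rewrite B; simpl pow.
  field; repeat split; try lra; apply pow_nonzero; lra.
Qed.

Lemma wallis_even m : wallis (2 * m) = PI / 2 * central_binom m.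
Proof.
  induction m as [|m IHm].
  - change (2 * 0)%nat with 0%nat; rewrite wallis_0; unfold central_binom; simpl; field.
  - pose proof (wallis_rec (2 * m)) as Hrec.
    replace (2 * m + 2)%nat with (2 * S m)%nat in Hrec by lia.
    rewrite mult_INR, IHm in Hrec; replace (INR 2) with 2 in Hrec by (simpl; lra).
    pose proof (pos_INR m).
    rewrite central_binom_S; apply (Rmult_eq_reg_l (2 * INR m + 2)); [| lra].
    transitivity ((2 * INR m + 1) * (PI / 2 * central_binom m)); [exact Hrec |].
    field; lra.
Qed.

Lemma central_binom_ge0 m : 0 <= central_binom m.
Proof.
  pose proof (wallis_ge0 (2 * m)) as H; rewrite wallis_even in H.
  pose proof PI_RGT_0; nra.
Qed.

Lemma central_binom_sq_le m : central_binom (S m) ^ 2 * PI * INR (S m) <= 1.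
Proof.
  pose proof (wallis_prod (2 * m + 1)) as Hprod.
  pose proof (wallis_S_le (2 * m + 1)) as Hle.
  replace (S (2 * m + 1)) with (2 * S m)%nat in Hprod, Hle by lia.
  replace (INR (2 * m + 1) + 1) with (2 * INR (S m)) in Hprod
    by (rewrite S_INR, plus_INR, mult_INR; simpl; ring).
  rewrite wallis_even in Hprod, Hle.
  pose proof PI_RGT_0; pose proof (pos_INR (S m)); pose proof (central_binom_ge0 (S m)).
  set (c := central_binom (S m)) in *; set (n := INR (S m)) in *.
  assert (Hc : 2 * n * (PI / 2 * c) * (PI / 2 * c) <= PI / 2).
  { rewrite <- Hprod at 3; apply Rmult_le_compat_l; [| exact Hle].
    apply Rmult_le_pos; [| apply Rmult_le_pos]; lra. }
  apply (Rmult_le_reg_l (PI / 2)); [lra |].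
  replace (PI / 2 * (c ^ 2 * PI * n)) with (2 * n * (PI / 2 * c) * (PI / 2 * c)) by (simpl; field).
  lra.
Qed.

Lemma central_binom_le_sqrt_diff m :
  central_binom (S m) <= 2 * (sqrt (INR (S m) / PI) - sqrt (INR m / PI)).
Proof.
  pose proof (central_binom_sq_le m) as Hsq; pose proof (central_binom_ge0 (S m)).
  pose proof PI_RGT_0; rewrite S_INR in *; pose proof (pos_INR m).
  set (c := central_binom (S m)) in *; set (M := INR m) in *.
  assert (Hs := sqrt_sqrt ((M + 1) / PI) ltac:(apply Rdiv_le_0_compat; lra)).
  assert (Hr := sqrt_sqrt (M / PI) ltac:(apply Rdiv_le_0_compat; lra)).
  assert (Hs0 : 0 < sqrt ((M + 1) / PI)) by (apply sqrt_lt_R0, Rdiv_lt_0_compat; lra).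
  pose proof (sqrt_pos (M / PI)).
  set (s := sqrt ((M + 1) / PI)) in *; set (r := sqrt (M / PI)) in *.
  assert (Es : s * s * PI = M + 1) by (rewrite Hs; field; lra).
  assert (Er : r * r * PI = M) by (rewrite Hr; field; lra).
  assert (Hc : c * PI * s <= 1).
  { assert (0 <= c * PI * s) by (apply Rmult_le_pos; [apply Rmult_le_pos |]; lra).
    assert ((c * PI * s) * (c * PI * s) <= 1).
    { replace ((c * PI * s) * (c * PI * s)) with (c ^ 2 * PI * (s * s * PI)) by ring.
      rewrite Es; lra. }
    nra. }
  (* (s - r)^2 >= 0 gives 2 (s - r) s >= s^2 - r^2 = 1 / PI *)
  assert (Hd : 1 <= 2 * (s - r) * PI * s).
  { assert (0 <= (s - r) * (s - r) * PI) by (apply Rmult_le_pos; [nra | lra]). nra. }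
  apply (Rmult_le_reg_r (PI * s)); [nra | lra].
Qed.

(** * The simple random walk *)

Definition walk_step (h : Z -> R) (x : Z) : R := (h (x + 1)%Z + h (x - 1)%Z) / 2.

(* [walk_exp n h] is the expectation of [h] at time [n] of the simple random walk
   started at [0], computed by conditioning on the first step. *)
Fixpoint walk_exp (n : nat) (h : Z -> R) : R :=
  match n with
  | O => h 0%Z
  | S n => walk_exp n (walk_step h)
  end.

Lemma walk_exp_ext n h g : (forall x, h x = g x) -> walk_exp n h = walk_exp n g.
Proof.
  revert h g; induction n as [|n IHn]; intros h g H; simpl; [apply H |].
  apply IHn; intros; unfold walk_step; rewrite !H; reflexivity.
Qed.

Lemma walk_exp_lin n a b h g :
  walk_exp n (fun x => a * h x + b * g x) = a * walk_exp n h + b * walk_exp n g.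
Proof.
  revert h g; induction n as [|n IHn]; intros h g; simpl; [reflexivity |].
  rewrite <- IHn; apply walk_exp_ext; intros; unfold walk_step; lra.
Qed.

Definition indicator (x y : Z) : R := if Z.eqb y x then 1 else 0.

Definition walk_prob (n : nat) (x : Z) : R := walk_exp n (indicator x).

Lemma walk_prob_S n x : walk_prob (S n) x = (walk_prob n (x - 1) + walk_prob n (x + 1)) / 2.
Proof.
  unfold walk_prob; simpl.
  rewrite (walk_exp_ext n _ (fun y => / 2 * indicator (x - 1) y + / 2 * indicator (x + 1) y)).
  - rewrite walk_exp_lin; lra.
  - intros y; unfold walk_step, indicator.
    destruct (Z.eqb_spec (y + 1) x), (Z.eqb_spec (y - 1) x),
      (Z.eqb_spec y (x - 1)), (Z.eqb_spec y (x + 1)); try lia; lra.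
Qed.

Definition binomZ (n : nat) (k : Z) : R := if Z.ltb k 0 then 0 else binom n (Z.to_nat k).

Lemma binomZ_S n k : binomZ (S n) k = binomZ n (k - 1) + binomZ n k.
Proof.
  unfold binomZ; destruct (Z.ltb_spec k 0), (Z.ltb_spec (k - 1) 0); try lia.
  - lra.
  - replace k with 0%Z by lia; destruct n; simpl; lra.
  - replace (Z.to_nat k) with (S (Z.to_nat (k - 1))) by lia; reflexivity.
Qed.

Lemma walk_prob_binom n k : walk_prob n (2 * k - Z.of_nat n)%Z = binomZ n k / 2 ^ n.
Proof.
  revert k; induction n as [|n IHn]; intros k.
  - unfold walk_prob, indicator, binomZ; cbn [walk_exp Z.of_nat pow].
    destruct (Z.ltb_spec k 0), (Z.eqb_spec 0 (2 * k - 0)); try lia.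
    + field.
    + replace (Z.to_nat k) with 0%nat by lia; simpl; field.
    + destruct (Z.to_nat k) eqn:E; [lia | simpl; field].
  - rewrite walk_prob_S, Nat2Z.inj_succ.
    replace (2 * k - Z.succ (Z.of_nat n) - 1)%Z with (2 * (k - 1) - Z.of_nat n)%Z by lia.
    replace (2 * k - Z.succ (Z.of_nat n) + 1)%Z with (2 * k - Z.of_nat n)%Z by lia.
    rewrite !IHn, binomZ_S; simpl pow.
    pose proof (pow_lt 2 n); field; lra.
Qed.

Lemma walk_prob_parity n x : Z.odd (Z.of_nat n + x) = true -> walk_prob n x = 0.
Proof.
  revert x; induction n as [|n IHn]; intros x H.
  - unfold walk_prob, indicator; cbn [walk_exp].
    destruct (Z.eqb_spec 0 x); [subst; discriminate | reflexivity].
  - rewrite Nat2Z.inj_succ in H; rewrite walk_prob_S, !IHn; [lra | |].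
    + replace (Z.of_nat n + (x + 1))%Z with (Z.succ (Z.of_nat n) + x)%Z by lia; exact H.
    + replace (Z.of_nat n + (x - 1))%Z with (Z.succ (Z.of_nat n) + x - 2)%Z by lia.
      rewrite Z.odd_sub, H; reflexivity.
Qed.

Lemma walk_return_even m : walk_prob (2 * m) 0 = central_binom m.
Proof.
  pose proof (walk_prob_binom (2 * m) (Z.of_nat m)) as H.
  replace (2 * Z.of_nat m - Z.of_nat (2 * m))%Z with 0%Z in H by lia.
  rewrite H; unfold binomZ, central_binom.
  destruct (Z.ltb_spec (Z.of_nat m) 0); [lia | rewrite Nat2Z.id; reflexivity].
Qed.

Lemma walk_return_odd m : walk_prob (2 * m + 1) 0 = 0.
Proof.
  apply walk_prob_parity.
  replace (Z.of_nat (2 * m + 1) + 0)%Z with (1 + 2 * Z.of_nat m)%Z by lia.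
  apply Z.odd_add_mul_2.
Qed.

Definition walk_abs (n : nat) : R := walk_exp n (fun x => IZR (Z.abs x)).

(* One step of the walk preserves the mean of |x| except at 0, where it gains 1. *)
Lemma walk_abs_S n : walk_abs (S n) = walk_abs n + walk_prob n 0.
Proof.
  unfold walk_abs, walk_prob; simpl.
  transitivity (1 * walk_exp n (fun x => IZR (Z.abs x)) + 1 * walk_exp n (indicator 0)); [| ring].
  rewrite <- walk_exp_lin; apply walk_exp_ext; intros x; unfold walk_step, indicator.
  destruct (Z.eqb_spec x 0) as [->|Hx]; [simpl; lra |].
  rewrite <- plus_IZR.
  replace (Z.abs (x + 1) + Z.abs (x - 1))%Z with (2 * Z.abs x)%Z by lia.
  rewrite mult_IZR; simpl; lra.
Qed.

Lemma walk_abs_odd_le m : walk_abs (2 * m + 1) <= 1 + 2 * sqrt (INR m / PI).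
Proof.
  induction m as [|m IHm].
  - change (2 * 0 + 1)%nat with 1%nat; rewrite walk_abs_S.
    unfold walk_abs, walk_prob, indicator; simpl.
    pose proof (sqrt_pos (0 / PI)); lra.
  - replace (2 * S m + 1)%nat with (S (S (2 * m + 1))) by lia.
    rewrite !walk_abs_S, walk_return_odd.
    replace (S (2 * m + 1)) with (2 * S m)%nat by lia.
    rewrite walk_return_even; pose proof (central_binom_le_sqrt_diff m); lra.
Qed.

Lemma walk_abs_le n : walk_abs n <= 1 + 2 * sqrt (INR n / (2 * PI)).
Proof.
  pose proof PI_RGT_0.
  assert (Hsqrt : forall m k, INR m <= INR k / 2 ->
    1 + 2 * sqrt (INR m / PI) <= 1 + 2 * sqrt (INR k / (2 * PI))).
  { intros m k Hm; apply Rplus_le_compat_l, Rmult_le_compat_l; [lra |].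
    apply sqrt_le_1_alt; replace (INR k / (2 * PI)) with (INR k / 2 / PI) by (field; lra).
    apply Rmult_le_compat_r; [apply Rlt_le, Rinv_0_lt_compat |]; lra. }
  destruct (Nat.Even_or_Odd n) as [[m ->] | [m ->]].
  - destruct m as [|m].
    + unfold walk_abs; simpl; pose proof (sqrt_pos (0 / (2 * PI))); lra.
    + replace (2 * S m)%nat with (S (2 * m + 1)) by lia.
      rewrite walk_abs_S, walk_return_odd, Rplus_0_r.
      eapply Rle_trans; [apply walk_abs_odd_le | apply Hsqrt].
      rewrite S_INR, plus_INR, mult_INR; simpl; pose proof (pos_INR m); lra.
  - eapply Rle_trans; [apply walk_abs_odd_le | apply Hsqrt].
    rewrite plus_INR, mult_INR; simpl; pose proof (pos_INR m); lra.
Qed.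

(** * Averages over the Boolean cube *)

Definition upd (s : nat -> bool) (k : nat) (b : bool) : nat -> bool :=
  fun j => if Nat.eqb j k then b else s j.

Lemma upd_eq s k b : upd s k b k = b.
Proof. unfold upd; rewrite Nat.eqb_refl; reflexivity. Qed.

Lemma upd_neq s k b j : j <> k -> upd s k b j = s j.
Proof. intros H; unfold upd; destruct (Nat.eqb_spec j k); [lia | reflexivity]. Qed.

Lemma upd_upd s k a b : upd (upd s k a) k b = upd s k b.
Proof.
  apply functional_extensionality; intros j; unfold upd; destruct (Nat.eqb j k); reflexivity.
Qed.

Lemma upd_comm s k k' a b : k <> k' -> upd (upd s k a) k' b = upd (upd s k' b) k a.
Proof.
  intros H; apply functional_extensionality; intros j; unfold upd.
  destruct (Nat.eqb_spec j k'), (Nat.eqb_spec j k); subst; try reflexivity; lia.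
Qed.

(* Uniform average of [f] over the assignments to the variables [0 .. c-1];
   the remaining variables are fixed to [false]. *)
Fixpoint cube_avg (c : nat) (f : (nat -> bool) -> R) : R :=
  match c with
  | O => f (fun _ => false)
  | S c => (cube_avg c (fun s => f (upd s c false)) + cube_avg c (fun s => f (upd s c true))) / 2
  end.

Lemma cube_avg_ext c f g : (forall s, f s = g s) -> cube_avg c f = cube_avg c g.
Proof.
  revert f g; induction c as [|c IHc]; intros f g H; simpl; [apply H |].
  f_equal; f_equal; apply IHc; intros; apply H.
Qed.

Lemma cube_avg_lin c a b f g :
  cube_avg c (fun s => a * f s + b * g s) = a * cube_avg c f + b * cube_avg c g.
Proof. revert f g; induction c as [|c IHc]; intros; simpl; [reflexivity | rewrite !IHc; lra]. Qed.

Lemma cube_avg_scal c a f : cube_avg c (fun s => a * f s) = a * cube_avg c f.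
Proof. revert f; induction c as [|c IHc]; intros; simpl; [reflexivity | rewrite !IHc; lra]. Qed.

Lemma cube_avg_const c x : cube_avg c (fun _ => x) = x.
Proof. induction c as [|c IHc]; simpl; [reflexivity | rewrite IHc; lra]. Qed.

Lemma cube_avg_lt c f g : (forall s, f s < g s) -> cube_avg c f < cube_avg c g.
Proof.
  revert f g; induction c as [|c IHc]; intros f g H; simpl; [apply H |].
  pose proof (IHc (fun s => f (upd s c false)) (fun s => g (upd s c false)) (fun s => H _)).
  pose proof (IHc (fun s => f (upd s c true)) (fun s => g (upd s c true)) (fun s => H _)).
  lra.
Qed.

Lemma cube_avg_split c k f : (k < c)%nat ->
  2 * cube_avg c f =
  cube_avg c (fun s => f (upd s k false)) + cube_avg c (fun s => f (upd s k true)).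
Proof.
  revert k f; induction c as [|c IHc]; intros k f Hk; [lia | simpl].
  destruct (Nat.eq_dec k c) as [->|Hkc].
  - assert (E : forall a b, cube_avg c (fun s => f (upd (upd s c a) c b))
                            = cube_avg c (fun s => f (upd s c b)))
      by (intros; apply cube_avg_ext; intros; rewrite upd_upd; reflexivity).
    rewrite !E; lra.
  - assert (E : forall a b, cube_avg c (fun s => f (upd (upd s c b) k a))
                            = cube_avg c (fun s => f (upd (upd s k a) c b)))
      by (intros; apply cube_avg_ext; intros; rewrite upd_comm by lia; reflexivity).
    rewrite !E.
    pose proof (IHc k (fun s => f (upd s c false)) ltac:(lia)).
    pose proof (IHc k (fun s => f (upd s c true)) ltac:(lia)).
    simpl in *; lra.
Qed.

Lemma cube_avg_split_xor c k k' f : (k < c)%nat -> (k' < c)%nat -> k <> k' ->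
  2 * cube_avg c f =
  cube_avg c (fun s => f (upd s k' (xorb (s k) false)))
  + cube_avg c (fun s => f (upd s k' (xorb (s k) true))).
Proof.
  intros Hk Hk' Hne.
  pose proof (cube_avg_split c k (fun s => f (upd s k' (xorb (s k) false))) Hk) as S0.
  pose proof (cube_avg_split c k (fun s => f (upd s k' (xorb (s k) true))) Hk) as S1.
  assert (U : forall a e, cube_avg c (fun s => f (upd (upd s k a) k' (xorb (upd s k a k) e)))
                        = cube_avg c (fun s => f (upd (upd s k a) k' (xorb a e))))
    by (intros; apply cube_avg_ext; intros; rewrite upd_eq; reflexivity).
  cbv beta in S0, S1; rewrite !U in S0, S1.
  pose proof (cube_avg_split c k f Hk) as T.
  pose proof (cube_avg_split c k' (fun s => f (upd s k false)) Hk') as T0.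
  pose proof (cube_avg_split c k' (fun s => f (upd s k true)) Hk') as T1.
  cbv beta in T0, T1.
  assert (E : forall a b, cube_avg c (fun s => f (upd (upd s k' b) k a))
                          = cube_avg c (fun s => f (upd (upd s k a) k' b)))
    by (intros; apply cube_avg_ext; intros; rewrite upd_comm by lia; reflexivity).
  rewrite !E in T0, T1; simpl xorb in S0, S1; lra.
Qed.

Fixpoint sumZ (n : nat) (f : nat -> Z) : Z :=
  match n with O => 0%Z | S n => (sumZ n f + f n)%Z end.

Lemma sumZ_ext n f g : (forall j, (j < n)%nat -> f j = g j) -> sumZ n f = sumZ n g.
Proof.
  revert f g; induction n as [|n IHn]; intros f g H; simpl; [reflexivity |].
  rewrite (IHn f g), (H n) by (try intros; try apply H; lia); reflexivity.
Qed.

Lemma sumZ_zero n : sumZ n (fun _ => 0%Z) = 0%Z.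
Proof. induction n as [|n IHn]; simpl; [reflexivity | rewrite IHn; reflexivity]. Qed.

Lemma sumZ_add n f g : sumZ n (fun j => f j + g j)%Z = (sumZ n f + sumZ n g)%Z.
Proof. induction n as [|n IHn]; simpl; [reflexivity | rewrite IHn; ring]. Qed.

Lemma sumZ_mul_l n c f : sumZ n (fun j => c * f j)%Z = (c * sumZ n f)%Z.
Proof. induction n as [|n IHn]; simpl; [ring | rewrite IHn; ring]. Qed.

Lemma sumZ_swap n m f :
  sumZ n (fun j => sumZ m (fun k => f j k)) = sumZ m (fun k => sumZ n (fun j => f j k)).
Proof.
  induction n as [|n IHn]; simpl; [rewrite sumZ_zero; reflexivity |].
  rewrite IHn, <- sumZ_add; reflexivity.
Qed.

Lemma sumZ_delta n k a : (k < n)%nat -> sumZ n (fun j => if Nat.eqb k j then a else 0%Z) = a.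
Proof.
  induction n as [|n IHn]; intros H; simpl; [lia |].
  destruct (Nat.eqb_spec k n) as [->|Hkn].
  - rewrite (sumZ_ext n _ (fun _ => 0%Z)), sumZ_zero; [ring |].
    intros j Hj; destruct (Nat.eqb_spec n j); [lia | reflexivity].
  - rewrite IHn by lia; ring.
Qed.

Lemma sumZ_update n f g k : (k < n)%nat -> (forall j, (j < n)%nat -> j <> k -> f j = g j) ->
  sumZ n f = (sumZ n g + (f k - g k))%Z.
Proof.
  revert f g; induction n as [|n IHn]; intros f g Hk H; simpl; [lia |].
  destruct (Nat.eq_dec k n) as [->|Hkn].
  - rewrite (sumZ_ext n f g) by (intros; apply H; lia); ring.
  - rewrite (IHn f g), (H n) by (auto; lia); ring.
Qed.

Lemma sumZ_nonzero_le_abs n w :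
  (sumZ n (fun k => if Z.eqb (w k) 0 then 0 else 1) <= sumZ n (fun k => Z.abs (w k)))%Z.
Proof.
  induction n as [|n IHn]; simpl; [lia |].
  destruct (Z.eqb_spec (w n) 0); lia.
Qed.

Definition sign (b : bool) : Z := if b then 1%Z else (-1)%Z.

Lemma cube_avg_walk n h : cube_avg n (fun s => h (sumZ n (fun j => sign (s j)))) = walk_exp n h.
Proof.
  revert h; induction n as [|n IHn]; intros h; simpl; [reflexivity |].
  assert (E : forall b,
    cube_avg n (fun s => h (sumZ n (fun j => sign (upd s n b j)) + sign (upd s n b n))%Z)
                = walk_exp n (fun x => h (x + sign b)%Z)).
  { intros b; rewrite <- IHn; apply cube_avg_ext; intros s.
    rewrite upd_eq, (sumZ_ext n _ (fun j => sign (s j))); [reflexivity |].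
    intros; rewrite upd_neq by lia; reflexivity. }
  rewrite !E, (walk_exp_ext n (walk_step h)
                (fun x => / 2 * h (x + sign true)%Z + / 2 * h (x + sign false)%Z)).
  - rewrite walk_exp_lin; lra.
  - intros x; unfold walk_step, sign; replace (x - 1)%Z with (x + -1)%Z by lia; lra.
Qed.

Lemma cube_avg_sign_sum c m w : (m <= c)%nat ->
  cube_avg c (fun s => IZR (sumZ m (fun k => sign (s k) * w k)%Z)) = 0.
Proof.
  induction m as [|m IHm]; intros Hm; simpl; [apply cube_avg_const |].
  rewrite (cube_avg_ext c _ (fun s => 1 * IZR (sumZ m (fun k => sign (s k) * w k)%Z)
                                    + 1 * IZR (sign (s m) * w m)%Z))
    by (intros; rewrite plus_IZR; ring).
  rewrite cube_avg_lin, IHm by lia.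
  pose proof (cube_avg_split c m (fun s => IZR (sign (s m) * w m)%Z) ltac:(lia)) as Hsplit.
  cbv beta in Hsplit.
  rewrite (cube_avg_ext c (fun s => IZR (sign (upd s m false m) * w m)%Z) (fun _ => - IZR (w m))),
    (cube_avg_ext c (fun s => IZR (sign (upd s m true m) * w m)%Z) (fun _ => IZR (w m))),
    !cube_avg_const in Hsplit
    by (intros; rewrite upd_eq, <- ?opp_IZR; f_equal; cbn [sign]; lia).
  lra.
Qed.

(** * Restrictions and the potential argument *)

Definition imbalance (X : list bool) : Z := (Z.of_nat (ones X) - Z.of_nat (zeros X))%Z.

Lemma imbalance_map_seq f n : imbalance (map f (seq 0 n)) = sumZ n (fun j => sign (f j)).
Proof.
  induction n as [|n IHn]; [reflexivity |].
  rewrite seq_S, map_app; simpl sumZ; rewrite <- IHn; unfold imbalance, ones, zeros.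
  rewrite !filter_app, !length_app; simpl; destruct (f n); simpl; lia.
Qed.

Lemma majority_true_imbalance X : majority X = true -> (0 <= imbalance X)%Z.
Proof.
  unfold majority, imbalance; destruct (Nat.ltb_spec (ones X) (zeros X)); [discriminate | lia].
Qed.

Lemma majority_false_imbalance X : majority X = false -> (imbalance X < 0)%Z.
Proof.
  unfold majority, imbalance; destruct (Nat.ltb_spec (ones X) (zeros X)); [lia | discriminate].
Qed.

Inductive literal : Type :=
| Const : bool -> literal
| Var : nat -> bool -> literal.

Definition literal_value (s : nat -> bool) (l : literal) : bool :=
  match l with
  | Const b => b
  | Var k p => xorb (s k) p
  end.

Definition literal_const (l : literal) : Z :=
  match l with
  | Const b => sign b
  | Var _ _ => 0%Z
  end.

Definition literal_weight (k : nat) (l : literal) : Z :=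
  match l with
  | Const _ => 0%Z
  | Var k' p => if Nat.eqb k' k then sign (negb p) else 0%Z
  end.

Lemma sign_literal_value n s l :
  (forall k p, l = Var k p -> (k < n)%nat) ->
  sign (literal_value s l)
  = (literal_const l + sumZ n (fun k => sign (s k) * literal_weight k l))%Z.
Proof.
  intros Hl; destruct l as [b | k p]; simpl.
  - rewrite (sumZ_ext n _ (fun _ => 0%Z)), sumZ_zero by (intros; ring); ring.
  - rewrite (sumZ_ext n _ (fun j => if Nat.eqb k j then (sign (s k) * sign (negb p))%Z else 0%Z)).
    + rewrite sumZ_delta by (eapply Hl; reflexivity); destruct (s k), p; reflexivity.
    + intros j _; destruct (Nat.eqb_spec k j) as [->|]; ring.
Qed.

(* [L j] expresses input bit [j] as a constant or as a uniformly random free variable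
   xored with a constant; following a path of a tree transforms the restriction. *)
Definition restriction : Type := nat -> literal.

Definition fix_var (L : restriction) (k : nat) (b : bool) : restriction := fun j =>
  match L j with
  | Var k' p => if Nat.eqb k' k then Const (xorb b p) else Var k' p
  | l => l
  end.

Definition alias_var (L : restriction) (k k' : nat) (e : bool) : restriction := fun j =>
  match L j with
  | Var k'' p => if Nat.eqb k'' k' then Var k (xorb e p) else Var k'' p
  | l => l
  end.

Section Restrictions.

Variable N : nat.

Definition instance (L : restriction) (s : nat -> bool) : list bool :=
  map (fun j => literal_value s (L j)) (seq 0 N).

Definition restriction_wf (L : restriction) : Prop :=
  forall j k p, (j < N)%nat -> L j = Var k p -> (k < N)%nat.

Definition var_weight (L : restriction) (k : nat) : Z := sumZ N (fun j => literal_weight k (L j)).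

Definition const_weight (L : restriction) : Z := sumZ N (fun j => literal_const (L j)).

Definition support (L : restriction) : Z :=
  sumZ N (fun k => if Z.eqb (var_weight L k) 0 then 0%Z else 1%Z).

Definition abs_avg (L : restriction) : R :=
  cube_avg N (fun s => IZR (Z.abs (imbalance (instance L s)))).

Definition cost_avg (t : xtree) (L : restriction) : R :=
  cube_avg N (fun s => INR (cost t (instance L s))).

Definition correct_on (t : xtree) (L : restriction) : Prop :=
  forall s, output t (instance L s) = majority (instance L s).

Lemma nth_instance L s i : (i < N)%nat -> nth i (instance L s) false = literal_value s (L i).
Proof.
  intros Hi; unfold instance.
  pose proof (map_nth (fun j => literal_value s (L j)) (seq 0 N) 0%nat i) as Hmap.
  rewrite nth_indep with (d' := literal_value s (L 0%nat)) by (rewrite length_map, length_seq; lia).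
  rewrite Hmap, seq_nth by lia; reflexivity.
Qed.

Lemma imbalance_instance L s : restriction_wf L ->
  imbalance (instance L s) = (const_weight L + sumZ N (fun k => sign (s k) * var_weight L k))%Z.
Proof.
  intros HL; unfold instance, var_weight, const_weight; rewrite imbalance_map_seq.
  rewrite (sumZ_ext N _
    (fun j => literal_const (L j) + sumZ N (fun k => sign (s k) * literal_weight k (L j))))%Z
    by (intros j Hj; apply sign_literal_value; intros k p; apply HL, Hj).
  rewrite sumZ_add, sumZ_swap; f_equal.
  apply sumZ_ext; intros; apply sumZ_mul_l.
Qed.

Lemma cube_avg_imbalance L : restriction_wf L ->
  cube_avg N (fun s => IZR (imbalance (instance L s))) = IZR (const_weight L).
Proof.
  intros HL.
  rewrite (cube_avg_ext N _ (fun s => 1 * IZR (const_weight L)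
                                    + 1 * IZR (sumZ N (fun k => sign (s k) * var_weight L k)%Z)))
    by (intros; rewrite imbalance_instance, plus_IZR by exact HL; ring).
  rewrite cube_avg_lin, cube_avg_const, cube_avg_sign_sum by lia; ring.
Qed.

(* Choosing the signs of all variables against (resp. along) their weights shows that a
   constant majority forces [|const_weight L|] to dominate the total absolute weight. *)
Lemma support_le_abs_avg L b : restriction_wf L ->
  (forall s, majority (instance L s) = b) -> IZR (support L) <= abs_avg L.
Proof.
  intros HL Hb.
  set (W := sumZ N (fun k => Z.abs (var_weight L k))).
  assert (Hsupp : (support L <= W)%Z) by apply sumZ_nonzero_le_abs.
  assert (Hextreme : forall sgn : Z, (sgn = 1 \/ sgn = -1)%Z ->
    imbalance (instance L (fun k => Z.ltb 0 (sgn * var_weight L k)))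
    = (const_weight L + sgn * W)%Z).
  { intros sgn Hsgn; rewrite imbalance_instance by exact HL; f_equal; unfold W.
    rewrite <- sumZ_mul_l; apply sumZ_ext; intros k _.
    destruct (Z.ltb_spec 0 (sgn * var_weight L k)); cbn [sign]; lia. }
  unfold abs_avg; destruct b.
  - rewrite (cube_avg_ext N _ (fun s => IZR (imbalance (instance L s))))
      by (intros s; f_equal; apply Z.abs_eq, majority_true_imbalance, Hb).
    rewrite cube_avg_imbalance by exact HL; apply IZR_le.
    pose proof (majority_true_imbalance _ (Hb (fun k => Z.ltb 0 (-1 * var_weight L k)))).
    rewrite Hextreme in * by lia; lia.
  - rewrite (cube_avg_ext N _ (fun s => -1 * IZR (imbalance (instance L s)) + 0 * 0)).
    2: { intros s; pose proof (majority_false_imbalance _ (Hb s)).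
         rewrite Z.abs_neq, opp_IZR by lia; ring. }
    rewrite cube_avg_lin, cube_avg_imbalance by exact HL.
    pose proof (majority_false_imbalance _ (Hb (fun k => Z.ltb 0 (1 * var_weight L k)))).
    rewrite Hextreme in * by lia.
    assert (IZR (support L) <= IZR (- const_weight L)) by (apply IZR_le; lia).
    rewrite opp_IZR in *; lra.
Qed.

Lemma instance_fix_var L k b s : instance L (upd s k b) = instance (fix_var L k b) s.
Proof.
  apply map_ext; intros j; unfold fix_var.
  destruct (L j) as [c | k' p]; [reflexivity |].
  destruct (Nat.eqb_spec k' k) as [->|]; simpl; [rewrite upd_eq | rewrite upd_neq]; auto.
Qed.

Lemma instance_alias_var L k k' e s : k <> k' ->
  instance L (upd s k' (xorb (s k) e)) = instance (alias_var L k k' e) s.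
Proof.
  intros Hne; apply map_ext; intros j; unfold alias_var.
  destruct (L j) as [c | k'' p]; [reflexivity |].
  destruct (Nat.eqb_spec k'' k') as [->|]; simpl.
  - rewrite upd_eq, xorb_assoc; reflexivity.
  - rewrite upd_neq; auto.
Qed.

Lemma fix_var_wf L k b : restriction_wf L -> restriction_wf (fix_var L k b).
Proof.
  intros HL j k0 p Hj; unfold fix_var.
  destruct (L j) as [c | k' p'] eqn:E; [discriminate |].
  destruct (Nat.eqb k' k); [discriminate | intros [= <- _]; eapply HL; eauto].
Qed.

Lemma alias_var_wf L k k' e :
  (k < N)%nat -> restriction_wf L -> restriction_wf (alias_var L k k' e).
Proof.
  intros Hk HL j k0 p Hj; unfold alias_var.
  destruct (L j) as [c | k'' p'] eqn:E; [discriminate |].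
  destruct (Nat.eqb k'' k'); intros [= <- _]; [exact Hk | eapply HL; eauto].
Qed.

Lemma var_weight_fix_var L k b x :
  var_weight (fix_var L k b) x = if Nat.eqb x k then 0%Z else var_weight L x.
Proof.
  unfold var_weight; destruct (Nat.eqb_spec x k) as [->|Hx].
  - rewrite <- (sumZ_zero N); apply sumZ_ext; intros j _; unfold fix_var.
    destruct (L j) as [c | k' p]; [reflexivity |].
    destruct (Nat.eqb_spec k' k); simpl; [reflexivity |].
    destruct (Nat.eqb_spec k' k); [lia | reflexivity].
  - apply sumZ_ext; intros j _; unfold fix_var.
    destruct (L j) as [c | k' p]; [reflexivity |].
    destruct (Nat.eqb_spec k' k) as [->|]; simpl; [| reflexivity].
    destruct (Nat.eqb_spec k x); [lia | reflexivity].
Qed.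

Lemma var_weight_alias_var L k k' e x : k <> k' ->
  var_weight (alias_var L k k' e) x =
  if Nat.eqb x k' then 0%Z
  else if Nat.eqb x k then (var_weight L k + sign (negb e) * var_weight L k')%Z
  else var_weight L x.
Proof.
  intros Hne; unfold var_weight.
  destruct (Nat.eqb_spec x k') as [->|Hx'].
  - rewrite <- (sumZ_zero N); apply sumZ_ext; intros j _; unfold alias_var.
    destruct (L j) as [c | k'' p]; [reflexivity |].
    destruct (Nat.eqb_spec k'' k'); simpl.
    + destruct (Nat.eqb_spec k k'); [lia | reflexivity].
    + destruct (Nat.eqb_spec k'' k'); [lia | reflexivity].
  - destruct (Nat.eqb_spec x k) as [->|Hx].
    + rewrite <- sumZ_mul_l, <- sumZ_add; apply sumZ_ext; intros j _; unfold alias_var.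
      destruct (L j) as [c | k'' p]; [simpl; ring |].
      destruct (Nat.eqb_spec k'' k') as [->|]; simpl.
      * rewrite Nat.eqb_refl; destruct (Nat.eqb_spec k' k); [lia |].
        rewrite Nat.eqb_refl; destruct e, p; reflexivity.
      * destruct (Nat.eqb_spec k'' k), (Nat.eqb_spec k'' k'); try lia; ring.
    + apply sumZ_ext; intros j _; unfold alias_var.
      destruct (L j) as [c | k'' p]; [reflexivity |].
      destruct (Nat.eqb_spec k'' k') as [->|]; simpl; [| reflexivity].
      destruct (Nat.eqb_spec k x), (Nat.eqb_spec k' x); try lia; reflexivity.
Qed.

Lemma support_fix_var L k b : (k < N)%nat -> (support L <= support (fix_var L k b) + 1)%Z.
Proof.
  intros Hk; unfold support.
  rewrite (sumZ_update N _
    (fun x => if Z.eqb (var_weight (fix_var L k b) x) 0 then 0%Z else 1%Z) k Hk).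
  - rewrite var_weight_fix_var, Nat.eqb_refl; simpl; destruct (Z.eqb (var_weight L k) 0); lia.
  - intros x _ Hx; rewrite var_weight_fix_var; destruct (Nat.eqb_spec x k); [lia | reflexivity].
Qed.

(* Merging [k'] into [k] kills the weight of [k'], and for at least one value of [e]
   the weight of [k] stays nonzero unless it was zero already. *)
Lemma support_alias_var L k k' : (k < N)%nat -> (k' < N)%nat -> k <> k' ->
  (2 * support L <= 3 + support (alias_var L k k' false) + support (alias_var L k k' true))%Z.
Proof.
  intros Hk Hk' Hne.
  set (nz := fun z : Z => if Z.eqb z 0 then 0%Z else 1%Z).
  assert (Hupd : forall e, support L =
    (support (alias_var L k k' e)
     + (nz (var_weight L k) - nz (var_weight L k + sign (negb e) * var_weight L k'))
     + nz (var_weight L k'))%Z).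
  { intros e; unfold support; fold nz.
    set (g := fun x =>
      if Nat.eqb x k then nz (var_weight L k) else nz (var_weight (alias_var L k k' e) x)).
    rewrite (sumZ_update N _ g k' Hk'),
      (sumZ_update N g (fun x => nz (var_weight (alias_var L k k' e) x)) k Hk).
    - unfold g; rewrite !var_weight_alias_var, !Nat.eqb_refl by exact Hne.
      destruct (Nat.eqb_spec k' k), (Nat.eqb_spec k k'); try lia.
      unfold nz; simpl; ring.
    - intros x _ Hx; unfold g; destruct (Nat.eqb_spec x k); [lia | reflexivity].
    - intros x _ Hx; unfold g; destruct (Nat.eqb_spec x k) as [->|]; [reflexivity |].
      rewrite var_weight_alias_var by exact Hne.
      destruct (Nat.eqb_spec x k'), (Nat.eqb_spec x k); try lia; reflexivity. }
  pose proof (Hupd false) as H0; pose proof (Hupd true) as H1; cbn [sign negb] in H0, H1.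
  unfold nz in H0, H1.
  destruct (Z.eqb_spec (var_weight L k) 0), (Z.eqb_spec (var_weight L k') 0),
    (Z.eqb_spec (var_weight L k + 1 * var_weight L k') 0),
    (Z.eqb_spec (var_weight L k + -1 * var_weight L k') 0); lia.
Qed.

Definition potential_bound (t : xtree) (L : restriction) : Prop :=
  restriction_wf L -> correct_on t L ->
  2 * IZR (support L) <= 3 * cost_avg t L + 2 * abs_avg L.

Section Child.

Variables (q : query) (t0 t1 : xtree) (L L' : restriction).
Variables (phi : (nat -> bool) -> nat -> bool) (a : bool).
Hypothesis instance_phi : forall s, instance L (phi s) = instance L' s.
Hypothesis answer_const : forall s, answer q (instance L' s) = a.

Lemma cost_avg_child :
  cube_avg N (fun s => INR (cost (Node q t0 t1) (instance L (phi s))))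
  = 1 + cost_avg (if a then t1 else t0) L'.
Proof.
  rewrite (cube_avg_ext N _
    (fun s => 1 * INR (cost (if a then t1 else t0) (instance L' s)) + 1 * 1)).
  - rewrite cube_avg_lin, cube_avg_const; unfold cost_avg; ring.
  - intros s; rewrite instance_phi; simpl cost; rewrite answer_const, S_INR; destruct a; ring.
Qed.

Lemma abs_avg_child :
  cube_avg N (fun s => IZR (Z.abs (imbalance (instance L (phi s))))) = abs_avg L'.
Proof. apply cube_avg_ext; intros s; rewrite instance_phi; reflexivity. Qed.

Lemma correct_on_child : correct_on (Node q t0 t1) L -> correct_on (if a then t1 else t0) L'.
Proof.
  intros Hc s; pose proof (Hc (phi s)) as H; rewrite instance_phi in H; simpl in H.
  rewrite answer_const in H; destruct a; exact H.
Qed.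

End Child.

Lemma potential_node q t0 t1 L L0 L1 phi0 phi1 a0 a1 :
  (forall f, 2 * cube_avg N f
             = cube_avg N (fun s => f (phi0 s)) + cube_avg N (fun s => f (phi1 s))) ->
  (forall s, instance L (phi0 s) = instance L0 s) -> (forall s, answer q (instance L0 s) = a0) ->
  (forall s, instance L (phi1 s) = instance L1 s) -> (forall s, answer q (instance L1 s) = a1) ->
  restriction_wf L0 -> restriction_wf L1 ->
  (2 * support L <= 3 + support L0 + support L1)%Z ->
  (forall (a : bool) L', potential_bound (if a then t1 else t0) L') ->
  potential_bound (Node q t0 t1) L.
Proof.
  intros Hsplit E0 Q0 E1 Q1 W0 W1 Hsupp IH _ Hc.
  assert (Hcost : 2 * cost_avg (Node q t0 t1) L
                  = 2 + cost_avg (if a0 then t1 else t0) L0 + cost_avg (if a1 then t1 else t0) L1).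
  { unfold cost_avg at 1; rewrite Hsplit, (cost_avg_child q t0 t1 L L0 phi0 a0),
      (cost_avg_child q t0 t1 L L1 phi1 a1) by assumption; ring. }
  assert (Habs : 2 * abs_avg L = abs_avg L0 + abs_avg L1).
  { unfold abs_avg at 1; rewrite Hsplit, (abs_avg_child L L0 phi0), (abs_avg_child L L1 phi1)
      by assumption; reflexivity. }
  pose proof (IH a0 L0 W0 (correct_on_child q t0 t1 L L0 phi0 a0 E0 Q0 Hc)).
  pose proof (IH a1 L1 W1 (correct_on_child q t0 t1 L L1 phi1 a1 E1 Q1 Hc)).
  apply IZR_le in Hsupp; rewrite !plus_IZR, !mult_IZR in Hsupp; lra.
Qed.

Lemma nth_instance_var L i k p s : (i < N)%nat -> L i = Var k p ->
  nth i (instance L s) false = xorb (s k) p.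
Proof. intros Hi E; rewrite nth_instance, E by exact Hi; reflexivity. Qed.

Lemma nth_instance_const L i c s : (i < N)%nat -> L i = Const c -> nth i (instance L s) false = c.
Proof. intros Hi E; rewrite nth_instance, E by exact Hi; reflexivity. Qed.

Section Cases.

Variables (q : query) (t0 t1 : xtree) (L : restriction).
Hypothesis IH : forall (a : bool) L', potential_bound (if a then t1 else t0) L'.

Lemma potential_node_const a :
  (forall s, answer q (instance L s) = a) -> potential_bound (Node q t0 t1) L.
Proof.
  intros Ha HL; apply (potential_node q t0 t1 L L L (fun s => s) (fun s => s) a a); auto;
    [intros f; change (fun s => f s) with f; lra | lia].
Qed.

Lemma potential_node_fix_var k ans : (k < N)%nat ->
  (forall b s, answer q (instance (fix_var L k b) s) = ans b) -> potential_bound (Node q t0 t1) L.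
Proof.
  intros Hk Ha HL.
  apply (potential_node q t0 t1 L (fix_var L k false) (fix_var L k true)
           (fun s => upd s k false) (fun s => upd s k true) (ans false) (ans true));
    auto using cube_avg_split, instance_fix_var, fix_var_wf.
  pose proof (support_fix_var L k false Hk); pose proof (support_fix_var L k true Hk); lia.
Qed.

Lemma potential_node_alias_var k k' ans : (k < N)%nat -> (k' < N)%nat -> k <> k' ->
  (forall e s, answer q (instance (alias_var L k k' e) s) = ans e) ->
  potential_bound (Node q t0 t1) L.
Proof.
  intros Hk Hk' Hne Ha HL.
  apply (potential_node q t0 t1 L (alias_var L k k' false) (alias_var L k k' true)
           (fun s => upd s k' (xorb (s k) false)) (fun s => upd s k' (xorb (s k) true))
           (ans false) (ans true));
    auto using cube_avg_split_xor, instance_alias_var, alias_var_wf, support_alias_var.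
Qed.

End Cases.

(* A query reads at most two literals: it is constant, depends on a single variable,
   or is the parity of two distinct variables. *)
Lemma potential_node_query q t0 t1 L : valid_query N q ->
  (forall (a : bool) L', potential_bound (if a then t1 else t0) L') ->
  potential_bound (Node q t0 t1) L.
Proof.
  intros Hq IH HL; generalize HL; destruct q as [i | i j]; simpl in Hq.
  - destruct (L i) as [c | k p] eqn:Ei.
    + apply (potential_node_const _ _ _ _ IH c).
      intros s; apply (nth_instance_const L i c s Hq Ei).
    + apply (potential_node_fix_var _ _ _ _ IH k (fun b => xorb b p)); [exact (HL i k p Hq Ei) |].
      intros b s; simpl; rewrite nth_instance by exact Hq; unfold fix_var; rewrite Ei; simpl.
      rewrite Nat.eqb_refl; reflexivity.
  - destruct Hq as [Hi Hj].
    destruct (L i) as [c1 | k1 p1] eqn:Ei, (L j) as [c2 | k2 p2] eqn:Ej.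
    + apply (potential_node_const _ _ _ _ IH (xorb c1 c2)).
      intros s; simpl; rewrite (nth_instance_const L i c1), (nth_instance_const L j c2); auto.
    + apply (potential_node_fix_var _ _ _ _ IH k2 (fun b => xorb c1 (xorb b p2)));
        [exact (HL j k2 p2 Hj Ej) |].
      intros b s; simpl; rewrite !nth_instance by assumption; unfold fix_var; rewrite Ei, Ej; simpl.
      rewrite Nat.eqb_refl; reflexivity.
    + apply (potential_node_fix_var _ _ _ _ IH k1 (fun b => xorb (xorb b p1) c2));
        [exact (HL i k1 p1 Hi Ei) |].
      intros b s; simpl; rewrite !nth_instance by assumption; unfold fix_var; rewrite Ei, Ej; simpl.
      rewrite Nat.eqb_refl; reflexivity.
    + destruct (Nat.eq_dec k1 k2) as [<-|Hne].
      * apply (potential_node_const _ _ _ _ IH (xorb p1 p2)).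
        intros s; simpl.
        rewrite (nth_instance_var L i k1 p1), (nth_instance_var L j k1 p2) by assumption.
        destruct (s k1), p1, p2; reflexivity.
      * apply (potential_node_alias_var _ _ _ _ IH k1 k2 (fun e => xorb p1 (xorb e p2)));
          [exact (HL i k1 p1 Hi Ei) | exact (HL j k2 p2 Hj Ej) | exact Hne |].
        intros e s; simpl; rewrite !nth_instance by assumption.
        unfold alias_var; rewrite Ei, Ej; simpl.
        rewrite Nat.eqb_refl; destruct (Nat.eqb_spec k1 k2); [lia |]; simpl.
        destruct (s k1), p1, p2, e; reflexivity.
Qed.

Lemma potential_bound_tree t : valid_tree N t -> forall L, potential_bound t L.
Proof.
  induction t as [b | q t0 IH0 t1 IH1]; intros Ht L HL Hc.
  - assert (Hb : forall s, majority (instance L s) = b) by (intros s; rewrite <- Hc; reflexivity).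
    pose proof (support_le_abs_avg L b HL Hb).
    unfold cost_avg; simpl cost; rewrite cube_avg_const; simpl; lra.
  - destruct Ht as [Hq [H0 H1]].
    apply potential_node_query; auto.
    intros [|]; auto.
Qed.

Definition identity_restriction : restriction := fun j => Var j false.

Lemma identity_restriction_wf : restriction_wf identity_restriction.
Proof. intros j k p Hj [= <- _]; exact Hj. Qed.

Lemma support_identity_restriction : support identity_restriction = Z.of_nat N.
Proof.
  unfold support; rewrite (sumZ_ext N _ (fun _ => 1%Z)).
  - clear; induction N as [|n IHn]; simpl; lia.
  - intros k Hk; unfold var_weight.
    rewrite (sumZ_ext N _ (fun j => if Nat.eqb k j then 1%Z else 0%Z)), sumZ_delta;
      [reflexivity | exact Hk |].
    intros j _; unfold identity_restriction; simpl.
    destruct (Nat.eqb_spec j k), (Nat.eqb_spec k j); subst; try lia; reflexivity.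
Qed.

Lemma abs_avg_identity_restriction : abs_avg identity_restriction = walk_abs N.
Proof.
  unfold abs_avg, walk_abs; rewrite <- cube_avg_walk; apply cube_avg_ext; intros s.
  unfold instance; rewrite imbalance_map_seq.
  do 3 f_equal; apply functional_extensionality; intros j; simpl; rewrite xorb_false_r; reflexivity.
Qed.

Lemma instance_length L s : length (instance L s) = N.
Proof. unfold instance; rewrite length_map, length_seq; reflexivity. Qed.

End Restrictions.

Lemma cost_avg_ge N t : valid_tree N t ->
  (forall X, length X = N -> output t X = majority X) ->
  2 / 3 * (INR N - walk_abs N) <= cost_avg N t identity_restriction.
Proof.
  intros Ht Hc.
  pose proof (potential_bound_tree N t Ht identity_restriction (identity_restriction_wf N)
                (fun s => Hc _ (instance_length N _ s))) as H.
  rewrite support_identity_restriction, abs_avg_identity_restriction, <- INR_IZR_INZ in H; lra.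
Qed.

(** * From the uniform distribution to a single input *)

Lemma cube_avg_infinite_sum c (F : nat -> (nat -> bool) -> R) (S : (nat -> bool) -> R) :
  (forall s, infinite_sum (fun k => F k s) (S s)) ->
  infinite_sum (fun k => cube_avg c (F k)) (cube_avg c S).
Proof.
  revert F S; induction c as [|c IHc]; intros F S HF; simpl; [apply HF |].
  apply is_series_Reals, (is_series_scal_r (/ 2)), (is_series_plus (V := R_NormedModule));
    apply is_series_Reals, IHc; intros; apply HF.
Qed.

Lemma infinite_sum_le a b la lb :
  (forall k, a k <= b k) -> infinite_sum a la -> infinite_sum b lb -> la <= lb.
Proof.
  intros H Ha Hb; apply (Rle_cv_lim (Un := sum_f_R0 a) (Vn := sum_f_R0 b)); auto.
  intros n; apply sum_Rle; auto.
Qed.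

Lemma exists_point_expectation_ge c (F : nat -> (nat -> bool) -> R) (p : nat -> R) B :
  (forall k, 0 <= p k) -> infinite_sum p 1 ->
  (forall k, 0 < p k -> B <= cube_avg c (F k)) ->
  exists s, forall S, infinite_sum (fun k => p k * F k s) S -> B <= S.
Proof.
  intros Hp Hsum HF; apply NNPP; intros Hno.
  assert (Hlow : forall s, {S | infinite_sum (fun k => p k * F k s) S /\ S < B}).
  { intros s; apply constructive_indefinite_description, NNPP; intros Hs.
    apply Hno; exists s; intros S HS; apply Rnot_lt_le; intros Hlt; apply Hs; exists S; auto. }
  set (S := fun s => proj1_sig (Hlow s)).
  pose proof (cube_avg_infinite_sum c (fun k s => p k * F k s) S
                (fun s => proj1 (proj2_sig (Hlow s)))) as Havg.
  assert (HavgB : cube_avg c S < B)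
    by (rewrite <- (cube_avg_const c B); apply cube_avg_lt; intros s; apply (proj2_sig (Hlow s))).
  assert (Hscaled : infinite_sum (fun k => p k * B) (1 * B))
    by (apply is_series_Reals, is_series_scal_r, is_series_Reals, Hsum).
  enough (1 * B <= cube_avg c S) by lra.
  refine (infinite_sum_le _ _ _ _ _ Hscaled Havg); intros k; cbv beta.
  rewrite cube_avg_scal.
  destruct (Rle_lt_or_eq_dec 0 (p k) (Hp k)) as [Hpos | <-]; [| lra].
  apply Rmult_le_compat_l; auto; lra.
Qed.

Lemma sqrt_8x_9PI x : 0 <= x -> sqrt (8 * x / (9 * PI)) = 4 / 3 * sqrt (x / (2 * PI)).
Proof.
  intros Hx; pose proof PI_RGT_0.
  replace (8 * x / (9 * PI)) with ((4 / 3) ^ 2 * (x / (2 * PI))) by (field; lra).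
  rewrite sqrt_mult, sqrt_pow2 by (try apply Rdiv_le_0_compat; lra); reflexivity.
Qed.

Theorem mainTheorem13 :
  exists d : R,
  forall (N : nat), (1 <= N)%nat ->
  forall (t : nat -> xtree) (p : nat -> R),
    (forall k, 0 <= p k) ->
    infinite_sum p 1 ->
    (forall k, valid_tree N (t k)) ->
    (forall X : list bool, length X = N ->
       forall k, 0 < p k -> output (t k) X = majority X) ->
    exists X : list bool, length X = N /\
      forall s : R,
        infinite_sum (fun k => p k * INR (cost (t k) X)) s ->
        2 / 3 * INR N - sqrt (8 * INR N / (9 * PI)) - d <= s.
Proof.
  exists 1; intros N _ t p Hp Hsum Hvalid Hcorrect.
  destruct (exists_point_expectation_ge N
              (fun k s => INR (cost (t k) (instance N identity_restriction s)))
              p (2 / 3 * (INR N - walk_abs N)) Hp Hsum) as [s Hs].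
  { intros k Hk; apply cost_avg_ge; auto. }
  exists (instance N identity_restriction s); split; [apply instance_length |].
  intros S HS; pose proof (Hs S HS); pose proof (walk_abs_le N).
  rewrite sqrt_8x_9PI by apply pos_INR; lra.
Qed.
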